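(* Let $T$ be a string of length $n$, let $1 \le i \le j \le n$, let $T[i..t]$ be the longest palindromic prefix and $T[s..j]$ the longest palindromic suffix of $T[i..j]$. Let $L$ be the maximum length of a maximal palindrome $T[p..q]$ of $T$ whose center $c = \frac{p+q}{2}$ satisfies $\frac{i+t}{2} < c < \frac{s+j}{2}$ (with $L = 0$ if no such center exists). Then the length of a longest palindromic substring of $T[i..j]$ equals $\max\{\,t-i+1,\; j-s+1,\; L\,\}$. Equivalently, defining the array $\mathsf{MP}[1..2n-1]$ by letting $\mathsf{MP}[2c-1]$ be the length of the maximal palindrome of $T$ with center $c$ for each $c \in \{1, 1.5, 2, \ldots, n-0.5, n\}$, we have $L = \max\{\mathsf{MP}[k] : i+t \le k \le s+j-2\}$ when $i+t \le s+j-2$.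
   Context: Strings are 1-indexed: $T[k]$ is the $k$-th character and $T[i..j] = T[i]\cdots T[j]$. A palindrome is a string equal to its reversal. The center of $T[p..q]$ is $\frac{p+q}{2}$. A palindromic substring $T[p..q]$ is a maximal palindrome in $T$ if $p = 1$, $q = n$, or $T[p-1] \ne T[q+1]$; for each integer or half-integer $c$ with $1 \le c \le n$ there is exactly one maximal palindrome with center $c$ (for half-integer $c$ it may be empty). The longest palindromic prefix (suffix) of $T[i..j]$ is the longest prefix (suffix) of $T[i..j]$ that is a palindrome. *)

(* Strings are sequences over an alphabet A : eqType.
   Positions are 1-indexed as in the paper. *)
From mathcomp Require Import all_boot.
Set Implicit Arguments. Unset Strict Implicit. Unset Printing Implicit Defensive.

Section Strings.
Variable A : eqType.

Definition is_pal (u : seq A) : bool := u == rev u.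

(* T[i..j] (1-indexed, inclusive); length (j+1) - i, so T[i..i-1] is empty *)
Definition sub (T : seq A) (i j : nat) : seq A :=
  take (j.+1 - i) (drop i.-1 T).

(* T[p..q] is a maximal palindrome of T (possibly empty when q = p - 1):
   1 <= p, q <= n, p <= q + 1, palindromic, and p = 1, q = n or T[p-1] <> T[q+1]. *)
Definition maxpal (T : seq A) (p q : nat) : bool :=
  [&& 1 <= p, q <= size T, p <= q.+1, is_pal (sub T p q) &
      [|| p == 1, q == size T | sub T p.-1 p.-1 != sub T q.+1 q.+1]].

Definition lps (u : seq A) : nat :=
  \max_(a < (size u).+1) \max_(b < (size u).+1 | (a <= b) && is_pal (drop a (take b u)))
     (b - a).

(* L: maximum length of a maximal palindrome T[p..q] whose center (p+q)/2
   lies strictly between cl/2 and cr/2 (0 if none). *)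
Definition Lmax (T : seq A) (cl cr : nat) : nat :=
  \max_(p < (size T).+2) \max_(q < (size T).+1 | maxpal T p q && (cl < p + q < cr))
     (q.+1 - p).

(* MP[k] (1 <= k <= 2n-1): length of the maximal palindrome of T with center
   c = (k+1)/2, i.e. with p + q = k + 1. *)
Definition MP (T : seq A) (k : nat) : nat :=
  \max_(p < (size T).+2) \max_(q < (size T).+1 | maxpal T p q && (p + q == k.+1))
     (q.+1 - p).

End Strings.

From mathcomp Require Import all_boot zify.
Set Implicit Arguments. Unset Strict Implicit. Unset Printing Implicit Defensive.

(* Two facts drive the theorem:
   - every palindrome extends, keeping its center, to a maximal palindrome
     of T ([pal_extends_to_maxpal]);
   - a palindrome of T whose center lies strictly between the centers of the
     longest palindromic prefix T[i..t] and suffix T[s..j] of T[i..j] lies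
     inside T[i..j]: otherwise, cut down to the window, it would give a longer
     palindromic prefix or suffix ([center_confined]).
   A palindrome of T[i..j] with center at most (i+t)/2 is no longer than
   T[i..t], one with center at least (s+j)/2 no longer than T[s..j], and any
   other one is dominated by its maximal extension, counted in [Lmax]; the
   converse bounds use [center_confined].  The second claim, [Lmax] as a
   range maximum of [MP], is a regrouping of maximal palindromes by center. *)

Lemma bigmax2_lb N M (C : nat -> nat -> bool) (F : nat -> nat -> nat) a b :
  a < N -> b < M -> C a b -> F a b <= \max_(x < N) \max_(y < M | C x y) F x y.
Proof.
move=> Ha Hb HC; apply: leq_trans (leq_bigmax (Ordinal Ha)).
exact: (leq_bigmax_cond (Ordinal Hb)).
Qed.

Lemma bigmax2_ub N M (C : nat -> nat -> bool) (F : nat -> nat -> nat) m :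
  (forall a b, a < N -> b < M -> C a b -> F a b <= m) ->
  \max_(x < N) \max_(y < M | C x y) F x y <= m.
Proof.
by move=> H; apply/bigmax_leqP => x _; apply/bigmax_leqP => y Hy; apply: H.
Qed.

Section MaximalPalindromes.
Variables (A : eqType) (T : seq A).
Local Notation n := (size T).

Lemma Lmax_lb cl cr p q :
  maxpal T p q -> cl < p + q < cr -> q.+1 - p <= Lmax T cl cr.
Proof.
move=> M Hc; have /and5P[_ Hq Hpq _ _] := M.
apply: (@bigmax2_lb _ _ (fun x y => maxpal T x y && (cl < x + y < cr))
  (fun x y => y.+1 - x)); [lia | lia | by rewrite M].
Qed.

Lemma Lmax_ub cl cr m :
  (forall p q, maxpal T p q -> cl < p + q < cr -> q.+1 - p <= m) ->
  Lmax T cl cr <= m.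
Proof.
move=> H; apply: (bigmax2_ub (C := fun x y => maxpal T x y && (cl < x + y < cr))
  (F := fun x y => y.+1 - x)) => p q _ _ /andP[M Hc].
exact: H.
Qed.

Lemma MP_lb p q : maxpal T p q -> q.+1 - p <= MP T (p + q).-1.
Proof.
move=> M; have /and5P[Hp Hq Hpq _ _] := M.
apply: (@bigmax2_lb _ _ (fun x y => maxpal T x y && (x + y == (p + q).-1.+1))
  (fun x y => y.+1 - x)); [lia | lia | rewrite M /=; apply/eqP; lia].
Qed.

Lemma MP_ub k m :
  (forall p q, maxpal T p q -> p + q = k.+1 -> q.+1 - p <= m) -> MP T k <= m.
Proof.
move=> H; apply: (bigmax2_ub (C := fun x y => maxpal T x y && (x + y == k.+1))
  (F := fun x y => y.+1 - x)) => p q _ _ /andP[M /eqP].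
exact: H.
Qed.

Lemma Lmax_MP cl cr : Lmax T cl cr = \max_(cl <= k < cr.-1) MP T k.
Proof.
apply/eqP; rewrite eqn_leq; apply/andP; split.
- apply: Lmax_ub => p q M Hc; apply: leq_trans (MP_lb M) _.
  have /and5P[Hp _ _ _ _] := M.
  by apply: (leq_bigmax_seq (F := MP T)) => //; rewrite mem_index_iota; lia.
- apply/bigmax_leqP_seq => k; rewrite mem_index_iota => Hk _.
  by apply: MP_ub => p q M Hpq; apply: Lmax_lb => //; lia.
Qed.

Variable x0 : A.
Local Notation c k := (nth x0 T k.-1).

Definition pal_at a b := forall k, a <= k <= b -> c k = c (a + b - k).

Lemma is_palP (u : seq A) : is_pal u <->
  forall k, k < size u -> nth x0 u k = nth x0 u (size u - k.+1).
Proof.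
rewrite /is_pal; split.
- by move/eqP=> E k Hk; rewrite {1}E nth_rev.
- move=> H; apply/eqP; apply: (eq_from_nth (x0 := x0)); first by rewrite size_rev.
  by move=> k Hk; rewrite nth_rev // H.
Qed.

Lemma size_sub a b : 1 <= a -> b <= n -> size (sub T a b) = b.+1 - a.
Proof. by move=> Ha Hb; rewrite /sub size_takel // size_drop; lia. Qed.

Lemma nth_sub a b k : 1 <= a -> k < b.+1 - a -> nth x0 (sub T a b) k = c (a + k).
Proof. by move=> Ha Hk; rewrite /sub nth_take // nth_drop; congr nth; lia. Qed.

Lemma sub_palP a b : 1 <= a -> b <= n -> is_pal (sub T a b) <-> pal_at a b.
Proof.
move=> Ha Hb; rewrite is_palP size_sub //; split.
- move=> H k Hk; have := H (k - a) ltac:(lia).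
  by rewrite !nth_sub //; try lia; congr (nth _ _ _ = nth _ _ _); lia.
- move=> H k Hk; rewrite !nth_sub //; try lia.
  by have := H (a + k) ltac:(lia); congr (nth _ _ _ = nth _ _ _); lia.
Qed.

Lemma sub_single k : 1 <= k <= n -> sub T k k = [:: c k].
Proof.
move=> /andP[H1 H2]; apply: (eq_from_nth (x0 := x0)).
  by rewrite size_sub //= subSnn.
rewrite size_sub // subSnn => m; rewrite ltnS leqn0 => /eqP->.
by rewrite nth_sub ?subSnn ?addn0.
Qed.

Lemma pal_at_inner p q a b : pal_at p q -> p <= a -> a + b = p + q -> pal_at a b.
Proof. by move=> H Hpa Hs k Hk; rewrite Hs; apply: H; lia. Qed.

Lemma pal_at_grow a b : 1 <= a -> pal_at a b -> c a.-1 = c b.+1 -> pal_at a.-1 b.+1.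
Proof.
move=> Ha H E k Hk; have -> : a.-1 + b.+1 - k = a + b - k by lia.
case: (ltngtP k a.-1) => [|Hk2|->]; [lia | | by have -> : a + b - a.-1 = b.+1 by lia].
case: (ltngtP k b.+1) => [Hk3||->]; [by apply: H; lia | lia |].
by have -> : a + b - b.+1 = a.-1 by lia.
Qed.

(* Extending while the flanking characters agree ends in a maximal
   palindrome with the same center. *)
Lemma pal_extends_to_maxpal a b : 1 <= a -> a <= b.+1 -> b <= n -> pal_at a b ->
  exists p q, [/\ maxpal T p q, p + q = a + b, p <= a & b <= q].
Proof.
elim: a b => [|a IH] b Ha Hab Hb H; first lia.
have Hpal : is_pal (sub T a.+1 b) by apply/sub_palP.
have stop_here : [|| a.+1 == 1, b == n | sub T a a != sub T b.+1 b.+1] ->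
    exists p q, [/\ maxpal T p q, p + q = a.+1 + b, p <= a.+1 & b <= q].
  by move=> Hend; exists a.+1, b; rewrite /maxpal Hpal Hend; split => //; lia.
case: (eqVneq a 0) => [a0 | an0]; first by apply: stop_here; rewrite a0.
case: (eqVneq b n) => [bn | bnn]; first by apply: stop_here; rewrite bn eqxx orbT.
case: (eqVneq (c a) (c b.+1)) => [E | NE].
- have Hgrow : pal_at a b.+1 by apply: (pal_at_grow (a := a.+1)).
  have [p [q [M S Hp Hq]]] := IH b.+1 ltac:(lia) ltac:(lia) ltac:(lia) Hgrow.
  by exists p, q; split => //; lia.
- apply: stop_here; rewrite !sub_single; [|lia|lia].
  by apply/or3P; apply: Or33; apply: contra NE => /eqP[->].
Qed.

Section Window.
Variables i j : nat.
Hypotheses (Hi : 1 <= i) (Hij : i <= j) (Hjn : j <= n).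

Lemma sub_window x y : x <= y -> y <= j.+1 - i ->
  drop x (take y (sub T i j)) = sub T (i + x) (i + y - 1).
Proof.
move=> Hxy Hy; rewrite /sub take_takel //.
have -> : (i + x).-1 = x + i.-1 by lia.
rewrite -drop_drop; set X := drop i.-1 T; rewrite take_drop.
by have -> : (i + y - 1).+1 - (i + x) + x = y by lia.
Qed.

Lemma lps_lb a b : i <= a -> a <= b.+1 -> b <= j -> is_pal (sub T a b) ->
  b.+1 - a <= lps (sub T i j).
Proof.
move=> Hia Hab Hbj Hpal.
apply: leq_trans (@bigmax2_lb (size (sub T i j)).+1 (size (sub T i j)).+1
  (fun x y => (x <= y) && is_pal (drop x (take y (sub T i j))))
  (fun x y => y - x) (a - i) (b.+1 - i) _ _ _); rewrite ?size_sub //; try lia.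
rewrite sub_window; [|lia|lia].
have -> : i + (a - i) = a by lia.
have -> : i + (b.+1 - i) - 1 = b by lia.
by rewrite Hpal andbT; lia.
Qed.

Lemma lps_ub m :
  (forall a b, i <= a -> a <= b.+1 -> b <= j -> is_pal (sub T a b) -> b.+1 - a <= m) ->
  lps (sub T i j) <= m.
Proof.
move=> H; rewrite /lps size_sub //.
apply: (bigmax2_ub
  (C := fun x y => (x <= y) && is_pal (drop x (take y (sub T i j))))
  (F := fun x y => y - x)) => x y _ Hy /andP[Hxy].
rewrite sub_window; [|lia|lia] => Hpal.
have -> : y - x = (i + y - 1).+1 - (i + x) by lia.
by apply: H => //; lia.
Qed.

Variables t s : nat.
Hypotheses (Hit : i <= t <= j) (His : i <= s <= j).
Hypothesis prefix_longest :
  forall t', i <= t' <= j -> is_pal (sub T i t') -> t' <= t.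
Hypothesis suffix_longest :
  forall s', i <= s' <= j -> is_pal (sub T s' j) -> s <= s'.

(* A palindrome of T centered strictly between the centers of the longest
   palindromic prefix and suffix of T[i..j] lies inside T[i..j]: otherwise
   its part inside the window is a longer palindromic prefix or suffix. *)
Lemma center_confined p q : 1 <= p -> q <= n -> pal_at p q ->
  i + t < p + q < s + j -> i <= p /\ q <= j.
Proof.
move=> Hp Hq Hpq Hc.
have left_end : p + q <= i + j -> i <= p.
  move=> Hcij; rewrite leqNgt; apply/negP => Hpi.
  suff : p + q - i <= t by lia.
  apply: prefix_longest; first lia.
  by apply/sub_palP; [lia | lia | apply: (pal_at_inner Hpq); lia].
have right_end : i + j < p + q -> q <= j.
  move=> Hcij; rewrite leqNgt; apply/negP => Hqj.
  suff : s <= p + q - j by lia.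
  apply: suffix_longest; first lia.
  by apply/sub_palP; [lia | lia | apply: (pal_at_inner Hpq); lia].
case: (leqP (p + q) (i + j)) => Hcij.
- by have := left_end Hcij; lia.
- by have := right_end Hcij; lia.
Qed.

Lemma lps_window :
  is_pal (sub T i t) -> is_pal (sub T s j) ->
  lps (sub T i j) = maxn (t.+1 - i) (maxn (j.+1 - s) (Lmax T (i + t) (s + j))).
Proof.
move=> Pt Ps; apply/eqP; rewrite eqn_leq; apply/andP; split.
- apply: lps_ub => a b Hia Hab Hbj Hpal.
  case: (leqP (a + b) (i + t)) => Cl; first lia.
  case: (leqP (s + j) (a + b)) => Cr; first lia.
  have Ha : 1 <= a by lia.
  have Hb : b <= n by lia.
  have [p [q [M S Hp Hq]]] :=
    pal_extends_to_maxpal Ha Hab Hb (proj1 (sub_palP Ha Hb) Hpal).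
  have := Lmax_lb M (cl := i + t) (cr := s + j) ltac:(lia); lia.
- rewrite !geq_max; apply/and3P; split.
  + by apply: lps_lb => //; lia.
  + by apply: lps_lb => //; lia.
  + apply: Lmax_ub => p q M Hc; have /and5P[Hp Hq Hpq Hpal _] := M.
    have [Hip Hqj] := center_confined Hp Hq (proj1 (sub_palP Hp Hq) Hpal) Hc.
    exact: lps_lb.
Qed.

End Window.
End MaximalPalindromes.

Theorem mainTheorem5 (A : eqType) (T : seq A) (i j t s : nat) :
  1 <= i -> i <= j -> j <= size T ->
  (* T[i..t] is the longest palindromic prefix of T[i..j] *)
  i <= t <= j -> is_pal (sub T i t) ->
  (forall t', i <= t' <= j -> is_pal (sub T i t') -> t' <= t) ->
  (* T[s..j] is the longest palindromic suffix of T[i..j] *)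
  i <= s <= j -> is_pal (sub T s j) ->
  (forall s', i <= s' <= j -> is_pal (sub T s' j) -> s <= s') ->
  lps (sub T i j) = maxn (t.+1 - i) (maxn (j.+1 - s) (Lmax T (i + t) (s + j)))
  /\ (i + t <= s + j - 2 ->
      Lmax T (i + t) (s + j) = \max_(i + t <= k < (s + j).-1) MP T k).
Proof.
move=> Hi Hij Hjn Hit Pt Tmax Hs Ps Smax; split; last by move=> _; apply: Lmax_MP.
have x0 : A by move: Hjn; case: (T) => [|x _] //=; lia.
exact: (lps_window x0 Hi Hij Hjn Hit Hs Tmax Smax Pt Ps).
Qed.
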